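(* Let $G=(V,E)$ be a control flow graph, let $p$ be a predicate node with successors $s_1,s_2$ in $G$ and with at least two successors in $A_p$. If $V_1\cap V_2\neq\emptyset$, then there are no nodes $a,b$ that are DOD on $p$.
   Context: A control flow graph (CFG) is a finite directed graph $G=(V,E)$ in which every node has at most two outgoing edges; nodes with exactly two outgoing edges are predicate nodes. A path from $n_1$ is a nonempty finite or infinite sequence of nodes with each adjacent pair an edge; it is maximal if it is infinite or its last node has no successor. $V_p$ is the set of nodes occurring on all maximal paths from $p$ in $G$. For $V'\subseteq V$, a $V'$-interval from $x$ to $y$ is a finite path $n_1\ldots n_k$ in $G$ with $k\ge 2$, $n_1=x\in V'$, $n_k=y\in V'$, and $n_i\notin V'$ for $1<i<k$. $A_p$ is the directed graph with node set $V_p$ and an edge $(x,y)$ iff there is a $V_p$-interval from $x$ to $y$ in $G$. For $i\in\{1,2\}$, $V_i$ is the set of nodes $n\in V_p$ such that there is a finite path in $G$ from $s_i$ to $n$ whose nodes other than the last one all lie outside $V_p$ (possibly $n=s_i$). For three distinct nodes $p,a,b$ with $p$ a predicate node with successors $s_1,s_2$, the nodes $a,b$ are DOD on $p$ if all maximal paths from $p$ contain both $a$ and $b$, all maximal paths from $s_1$ contain $a$ before any occurrence of $b$, and all maximal paths from $s_2$ contain $b$ before any occurrence of $a$. *)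

From mathcomp Require Import all_boot.
Set Implicit Arguments. Unset Strict Implicit. Unset Printing Implicit Defensive.

Section CFG.
Variables (T : finType) (E : rel T).

Definition is_cfg : Prop := forall x : T, #|[pred y | E x y]| <= 2.

Definition predicate_node (x : T) : Prop := #|[pred y | E x y]| = 2.

Definition inf_path (f : nat -> T) : Prop := forall i, E (f i) (f i.+1).

(* a maximal finite path from x: the node list x :: s, whose last node has no successor *)
Definition max_fin_path (x : T) (s : seq T) : Prop :=
  path E x s /\ forall y, ~~ E (last x s) y.

Definition on_all_max (x n : T) : Prop :=
  (forall f : nat -> T, f 0 = x -> inf_path f -> exists i, f i = n) /\
  (forall s : seq T, max_fin_path x s -> n \in x :: s).

Definition all_max_before (x a b : T) : Prop :=
  (forall f : nat -> T, f 0 = x -> inf_path f ->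
     exists i, f i = a /\ forall j, j <= i -> f j <> b) /\
  (forall s : seq T, max_fin_path x s ->
     a \in x :: s /\ index a (x :: s) < index b (x :: s)).

Definition Vp (p n : T) : Prop := on_all_max p n.

(* a V'-interval from x to y: the path x :: s ++ [y], interior nodes s outside V' *)
Definition interval (V' : T -> Prop) (x y : T) : Prop :=
  V' x /\ V' y /\
  exists s : seq T, path E x (rcons s y) /\ forall z, z \in s -> ~ V' z.

Definition Ap_edge (p x y : T) : Prop := interval (Vp p) x y.

Definition Vi (p si n : T) : Prop :=
  Vp p n /\
  exists s : seq T, path E si s /\ last si s = n /\
    forall z, z \in belast si s -> ~ Vp p z.

Definition DOD (p s1 s2 a b : T) : Prop :=
  p <> a /\ p <> b /\ a <> b /\
  on_all_max p a /\ on_all_max p b /\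
  all_max_before s1 a b /\ all_max_before s2 b a.

End CFG.

(* Let n be a node of V_1 ∩ V_2, reached from s_i by a path whose nodes before n
   lie outside V_p, hence avoid a and b.  Prefixing such a path to a maximal path
   from n gives a maximal path from s_i, so on every maximal path from n the node
   a comes before b (looking from s_1) and b comes before a (looking from s_2).
   Since some maximal path from n exists, this is absurd. *)

From Stdlib Require Import Classical.
From mathcomp Require Import all_boot.

Set Implicit Arguments. Unset Strict Implicit. Unset Printing Implicit Defensive.

Section MaximalPaths.
Variables (T : finType) (E : rel T).

Lemma max_path_exists x :
  (exists s, max_fin_path E x s) \/ exists f, f 0 = x /\ inf_path E f.
Proof.
have [fin | nofin] := classic (exists s, max_fin_path E x s); [by left | right].
pose g y := odflt y [pick z | E y z].
have succ_g s : path E x s -> E (last x s) (g (last x s)).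
  rewrite /g; case: pickP => //= none Es.
  by case: nofin; exists s; split=> // z; rewrite none.
pose f i := iter i g x.
have reach i : exists s, path E x s /\ last x s = f i.
  elim: i => [|i [s [Es Ls]]]; first by exists [::].
  exists (rcons s (g (last x s))).
  by rewrite rcons_path Es succ_g // last_rcons Ls.
exists f; split=> // i.
have [s [Es Ls]] := reach i.
by rewrite /f iterS -/(f i) -Ls; apply: succ_g.
Qed.

Lemma all_max_before_succ x y a b :
  E x y -> x != a -> x != b ->
  all_max_before E x a b -> all_max_before E y a b.
Proof.
move=> Exy xa xb [before_inf before_fin]; split.
  move=> f f0 Ef.
  pose h j := if j is j'.+1 then f j' else x.
  have Eh : inf_path E h by case=> [|j] /=; rewrite ?f0.
  have [[|i] [hi hb]] := before_inf h erefl Eh.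
    by move: hi xa => /= ->; rewrite eqxx.
  by exists i; split=> // j ji; apply: (hb j.+1).
move=> s [Es dead].
have [] := before_fin (y :: s); first by split; rewrite /= ?Exy.
by rewrite inE eq_sym (negbTE xa) /= (negbTE xa) (negbTE xb) ltnS.
Qed.

Lemma all_max_before_path x s a b :
  path E x s -> a \notin belast x s -> b \notin belast x s ->
  all_max_before E x a b -> all_max_before E (last x s) a b.
Proof.
elim: s x => [|y s IHs] x //= /andP[Exy Es].
rewrite !inE !negb_or => /andP[ax a_s] /andP[bx b_s] before.
apply: IHs => //; apply: all_max_before_succ Exy _ _ before; by rewrite eq_sym.
Qed.

Lemma all_max_before_asym x a b :
  all_max_before E x a b -> all_max_before E x b a -> False.
Proof.
move=> [ab_inf ab_fin] [ba_inf ba_fin].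
have [[s xs] | [f [f0 Ef]]] := max_path_exists x.
  have [_ ab] := ab_fin s xs; have [_ ba] := ba_fin s xs.
  by have := ltn_trans ab ba; rewrite ltnn.
have [i [fi fb]] := ab_inf f f0 Ef; have [j [fj fa]] := ba_inf f f0 Ef.
by case: (leqP i j) => [ij | /ltnW ji]; [apply: (fa i) | apply: (fb j)].
Qed.

End MaximalPaths.

Theorem lemma4p10 (T : finType) (E : rel T) (p s1 s2 : T) :
  is_cfg E ->
  predicate_node E p -> s1 <> s2 -> E p s1 -> E p s2 ->
  (exists y1 y2, y1 <> y2 /\ Ap_edge E p p y1 /\ Ap_edge E p p y2) ->
  (exists n, Vi E p s1 n /\ Vi E p s2 n) ->
  ~ (exists a b, DOD E p s1 s2 a b).
Proof.
move=> _ _ _ _ _ _ [n [[_ [pi1 [Ep1 [L1 out1]]]] [_ [pi2 [Ep2 [L2 out2]]]]]].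
move=> [a [b [_ [_ [_ [Va [Vb [before1 before2]]]]]]]].
have avoid si pi z : (forall y, y \in belast si pi -> ~ Vp E p y) ->
    Vp E p z -> z \notin belast si pi.
  by move=> out Vz; apply/negP => /out.
apply: (@all_max_before_asym _ E n a b).
  by rewrite -L1; apply: all_max_before_path; rewrite ?avoid.
by rewrite -L2; apply: all_max_before_path; rewrite ?avoid.
Qed.
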